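(* Let $X$ be a Tychonoff space. If player II has a winning strategy in the game $\mathsf{G}_1(\mathcal{O}, \mathcal{O})$ played on $X$, then player II has a winning strategy in the game $\mathsf{G}_1(\Omega_{\mathrm{o}}, \Omega_{\mathrm{o}})$ played on $C_p(X)$, and $C_p(X)$ is productively countably tight.
   Context: $\mathcal{O}$ is the collection of all open covers of $X$. For families $\mathcal{A},\mathcal{B}$, the game $\mathsf{G}_1(\mathcal{A},\mathcal{B})$ is played in innings $n \in \omega$: player I chooses $A_n \in \mathcal{A}$, then player II chooses $a_n \in A_n$; II wins iff $\{a_n : n \in \omega\} \in \mathcal{B}$. $C_p(X)$ is the space of continuous real-valued functions on $X$ with the topology of pointwise convergence, $\mathrm{o}$ is the constant zero function, and $\Omega_{\mathrm{o}}$ is the collection of all sets $A \subset C_p(X)$ with $\mathrm{o} \notin A$ and $\mathrm{o} \in \overline{A}$. A space $Z$ is productively countably tight if $Z \times Y$ is countably tight for every countably tight space $Y$ (countably tight: whenever $y \in \overline{A}$ there is a countable $B \subset A$ with $y \in \overline{B}$). *)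

From HB Require Import structures.
From mathcomp Require Import all_boot all_order all_algebra.
From mathcomp Require Import all_classical all_reals all_analysis.
Unset Printing Implicit Defensive.
Import Order.TTheory GRing.Theory Num.Theory.
Import numFieldNormedType.Exports.
Local Open Scope classical_set_scope.
Local Open Scope ring_scope.

Definition tychonoff_space (X : topologicalType) : Prop :=
  completely_regular_space X /\ accessible_space X.

Definition open_covers (X : topologicalType) : set (set (set X)) :=
  [set U | (forall u, U u -> open u) /\ \bigcup_(u in U) u = setT].

(* The game G_1(A, B): in inning n, I plays As n in A, II answers an element
   of As n; II wins iff the set of II's answers belongs to B.
   A strategy for II maps the finite sequence of I's moves so far
   [:: As 0; ...; As n] to II's answer in inning n. *)
Definition II_has_winning_strategy {T : Type} (A B : set (set T)) : Prop :=
  exists sigma : seq (set T) -> T,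
    forall As : nat -> set T, (forall n, A (As n)) ->
      (forall n, As n (sigma (mkseq As n.+1))) /\
      B (range (fun n => sigma (mkseq As n.+1))).

Definition continuous_fun_set (R : realType) (X : topologicalType)
  : set {ptws X -> R} := [set f | continuous (f : X -> R)].

Definition Cp (R : realType) (X : topologicalType) : topologicalType :=
  set_type (continuous_fun_set R X).

Lemma continuous_fun_set0 (R : realType) (X : topologicalType) :
  (fun _ : X => 0 : R) \in continuous_fun_set R X.
Proof. by apply/mem_set; exact: cst_continuous. Qed.

Definition Cp_zero (R : realType) (X : topologicalType) : Cp R X :=
  exist _ (fun _ : X => 0 : R) (continuous_fun_set0 R X).

Definition Omega_o (R : realType) (X : topologicalType) : set (set (Cp R X)) :=
  [set A | ~ A (Cp_zero R X) /\ closure A (Cp_zero R X)].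

Definition countably_tight (Z : topologicalType) : Prop :=
  forall (A : set Z) (z : Z), closure A z ->
    exists B : set Z, [/\ B `<=` A, countable B & closure B z].

Definition productively_countably_tight (Z : topologicalType) : Prop :=
  forall Y : topologicalType, countably_tight Y ->
    countably_tight (Z * Y)%type.

From HB Require Import structures.
From mathcomp Require Import all_boot all_order all_algebra.
From mathcomp Require Import all_classical all_reals all_analysis.
From Stdlib Require Cantor.
From mathcomp Require Import zify.

Set Implicit Arguments. Unset Strict Implicit. Unset Printing Implicit Defensive.
Import Order.TTheory GRing.Theory Num.Theory.
Import numFieldNormedType.Exports.
Local Open Scope classical_set_scope.

(* A winning strategy sigma of II in G_1(O, O) yields a strategy for the player
   who, in the dual game, plays finite sets F_n and is answered by open sets
   W_n containing them, such that every finite set lies in some W_n, and in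
   fact in some W_n along each of countably many interleaved threads. Its
   building block: after any position s some point x is cofinal for sigma,
   i.e. every open neighbourhood of x is sigma's answer to some open cover.
   In C_p(X), II answers A_n in Omega_o by some f_n in A_n that is
   1/(m+1)-close to o on F_n, m being the thread of n; the sets
   {|f_n| < 1/(m+1)} then answer the F_n, so every neighbourhood of o meets
   {f_n}. For the product with a countably tight Y the same choice is made
   along a countable tree of histories, using countable tightness of Y at each
   node. *)

Definition II_winning T (A B : set (set T)) (sigma : seq (set T) -> T) :=
  forall As : nat -> set T, (forall n, A (As n)) ->
    (forall n, As n (sigma (mkseq As n.+1))) /\
    B (range (fun n => sigma (mkseq As n.+1))).

Notation pairn := Cantor.to_nat.
Notation unpairn := Cantor.of_nat.

Lemma pairn_mono i j j' : (j' < j)%N -> (pairn (i, j') < pairn (i, j))%N.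
Proof.
move=> lt_j; have := Cantor.to_nat_spec i j; have := Cantor.to_nat_spec i j'.
nia.
Qed.

Lemma leq_pairn i j : (j <= pairn (i, j))%N.
Proof. have := Cantor.to_nat_non_decreasing i j; lia. Qed.

Lemma eq_in_mkseq T (f g : nat -> T) n :
  {in gtn n, f =1 g} -> mkseq f n = mkseq g n.
Proof. by move=> fg; apply/eq_in_map => i; rewrite mem_iota => /andP[_]; apply: fg. Qed.

Fixpoint history T (step : seq T -> T) (t : nat) : seq T :=
  if t is t'.+1 then rcons (history step t') (step (history step t')) else [::].

Lemma historyE T (step : seq T -> T) t :
  history step t = mkseq (fun i => step (history step i)) t.
Proof. by elim: t => [//|t IHt]; rewrite mkseqS -IHt. Qed.

Section FiniteSetGame.
Variable X : topologicalType.

Definition fin_strategy := seq (set X) -> seq X.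

Definition answers (psi : fin_strategy) (W : nat -> set X) :=
  forall n, open (W n) /\ {in psi (mkseq W n), forall x, W n x}.

Definition wins_upto (k : nat) (psi : fin_strategy) :=
  forall W, answers psi W -> forall G : seq X, (size G <= k)%N ->
    exists n, {in G, forall x, W n x}.

Definition thread (W : nat -> set X) (i j : nat) := W (pairn (i, j)).

(* Move [pairn (i, j)] is played by [psi i], which sees the whole history and
   the [j] previous moves of its own thread [i]. *)
Definition interleave (psi : nat -> seq (set X) -> seq (set X) -> seq X)
    : fin_strategy := fun h =>
  let ij := unpairn (size h) in
  psi ij.1 h [seq nth setT h (pairn (ij.1, j)) | j <- iota 0 ij.2].

Lemma answers_interleave psi W : answers (interleave psi) W -> forall i j,
  open (thread W i j) /\
  {in psi i (mkseq W (pairn (i, j))) (mkseq (thread W i) j),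
    forall x, thread W i j x}.
Proof.
move=> ansW i j; have [oW sub] := ansW (pairn (i, j)); split => //.
move: sub; rewrite /interleave size_mkseq Cantor.cancel_of_to /=.
congr {in psi i _ _, _}; apply/eq_in_map => j'.
rewrite mem_iota add0n /= => lt_j; rewrite nth_mkseq //; exact: pairn_mono.
Qed.

Section FromOpenCoverStrategy.
Variable sigma : seq (set (set X)) -> set X.
Hypothesis sigma_wins : II_winning (open_covers X) (open_covers X) sigma.

Definition open_cover_seq (s : seq (set (set X))) :=
  forall i, (i < size s)%N -> open_covers X (nth set0 s i).

Lemma sigma_rcons_mem s U : open_cover_seq s -> open_covers X U ->
  U (sigma (rcons s U)).
Proof.
move=> covs covU; pose As n := nth U (rcons s U) n.
have covA n : open_covers X (As n).
  rewrite /As nth_rcons; case: ltnP => [lt_n|_].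
    by rewrite (set_nth_default set0) //; exact: covs.
  by case: eqP.
have := (sigma_wins covA).1 (size s).
suff -> : mkseq As (size s).+1 = rcons s U by rewrite /As nth_rcons ltnn eqxx.
apply: (@eq_from_nth _ U); first by rewrite size_mkseq size_rcons.
by move=> i; rewrite size_mkseq => lt_i; rewrite nth_mkseq.
Qed.

Definition sigma_cofinal (s : seq (set (set X))) (x : X) :=
  forall V, open V -> V x ->
    exists U, open_covers X U /\ sigma (rcons s U) = V.

(* Otherwise the open sets that are never answers of sigma after [s] would
   form an open cover, to which sigma must answer with one of them. *)
Lemma exists_sigma_cofinal s : open_cover_seq s -> exists x, sigma_cofinal s x.
Proof.
move=> covs; apply: contrapT => none.
pose Us := [set V : set X | open V /\ exists x, V x /\
  ~ (exists U, open_covers X U /\ sigma (rcons s U) = V)].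
have covUs : open_covers X Us.
  split; first by move=> u [].
  apply/seteqP; split => // x _.
  have : ~ sigma_cofinal s x by move=> cx; apply: none; exists x.
  move=> /existsNP [V] /not_implyP [oV] /not_implyP [Vx] nV.
  by exists V => //; split => //; exists x.
have [_ [x [_ nV]]] := sigma_rcons_mem covs covUs.
by apply: nV; exists Us.
Qed.

Definition cofinal_point (s : seq (set (set X))) : seq X :=
  if pselect (exists x, sigma_cofinal s x) is left e then [:: projT1 (cid e)]
  else [::].

Definition cover_with_answer (s : seq (set (set X))) (V : set X) :=
  xget setT [set U | open_covers X U /\ sigma (rcons s U) = V].

Lemma cover_with_answerP s V : open_cover_seq s -> open V ->
  {in cofinal_point s, forall x, V x} ->
  open_covers X (cover_with_answer s V) /\
  sigma (rcons s (cover_with_answer s V)) = V.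
Proof.
move=> covs oV; rewrite /cofinal_point; case: pselect => [e|]; last first.
  by move=> none; exfalso; exact: none (exists_sigma_cofinal covs).
move=> Vx; have : exists U, open_covers X U /\ sigma (rcons s U) = V.
  by apply: (projT2 (cid e)) => //; apply: Vx; rewrite mem_head.
exact: xgetPex.
Qed.

Definition replay (W : nat -> set X) (p : seq nat) : seq (set (set X)) :=
  foldl (fun s m => rcons s (cover_with_answer s (W m))) [::] p.

Lemma replay_nth_mkseq (W : nat -> set X) n p : {in p, forall m, m < n}%N ->
  replay (nth setT (mkseq W n)) p = replay W p.
Proof.
elim/last_ind: p => // p m IHp lt_pn.
have lt_p : {in p, forall m', m' < n}%N.
  by move=> m' pm'; apply: lt_pn; rewrite mem_rcons in_cons pm' orbT.
rewrite /replay !foldl_rcons -/(replay (nth setT (mkseq W n)) p) -/(replay W p).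
by rewrite IHp // nth_mkseq // lt_pn // mem_rcons mem_head.
Qed.

Definition depth (p : seq nat) := (sumn p).+1.

Lemma mem_lt_depth p m : m \in p -> (m < depth p)%N.
Proof.
rewrite /depth; elim: p => //= a p IHp; rewrite in_cons => /orP [/eqP ->|/IHp]; lia.
Qed.

(* Thread [pickle p] plays a cofinal point of sigma after the covers replayed
   along the positions [p], together with the moves of [psi] on its thread
   shifted by [depth p], which exceeds every entry of [p]. *)
Definition extend (psi : fin_strategy) : fin_strategy :=
  interleave (fun i h th =>
    if @unpickle (seq nat) i is Some p then
      if (depth p <= size th)%N then
        cofinal_point (replay (nth setT h) p) ++ psi (drop (depth p) th)
      else [::]
    else [::]).

Section Extend.
Variables (psi : fin_strategy) (W : nat -> set X).
Hypothesis ansW : answers (extend psi) W.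

Lemma answers_extend_thread p :
  answers psi (fun c => W (pairn (pickle p, c + depth p))).
Proof.
move=> c; have [oW] := answers_interleave ansW (pickle p) (c + depth p).
rewrite pickleK size_mkseq leq_addl => sub; split => // x psix.
apply: sub; rewrite mem_cat orbC; apply/orP; left; move: psix.
congr (x \in psi _); apply: (@eq_from_nth _ setT).
  by rewrite size_drop !size_mkseq addnK.
move=> i; rewrite size_mkseq => lt_i.
by rewrite nth_drop !nth_mkseq 1?addnC ?ltn_add2r.
Qed.

Lemma answers_extend_cofinal p c :
  {in cofinal_point (replay W p), forall x, W (pairn (pickle p, c + depth p)) x}.
Proof.
have [_] := answers_interleave ansW (pickle p) (c + depth p).
rewrite pickleK size_mkseq leq_addl replay_nth_mkseq => [sub x px|m pm].
  by apply: sub; rewrite mem_cat px.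
apply: leq_trans (mem_lt_depth pm) _; apply: leq_trans (leq_pairn _ _).
exact: leq_addl.
Qed.

End Extend.

(* For [G = a :: G'], each thread [pickle p] of [extend psi] catches [G'] at
   some move [nx p]. Replaying along these moves the covers to which sigma
   answers [W (nx p)] gives a play of G_1(O, O) won by sigma, so some answer
   [W (nx p)] also contains [a]. *)
Lemma wins_upto_extend psi k : wins_upto k psi -> wins_upto k.+1 (extend psi).
Proof.
move=> win W ansW [|a G] /= sizeG; first by exists 0%N.
have catch p : exists c, {in G, forall x, W (pairn (pickle p, c + depth p)) x}.
  exact: win (answers_extend_thread ansW p) _ _.
pose nx p := pairn (pickle p, projT1 (cid (catch p)) + depth p).
pose P := history nx.
pose U t := cover_with_answer (replay W (P t)) (W (nx (P t))).
have replayP t : replay W (P t) = mkseq U t.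
  elim: t => [//|t IHt]; rewrite mkseqS -IHt.
  by rewrite /replay /= foldl_rcons.
have answerU t : open_cover_seq (mkseq U t) ->
    open_covers X (U t) /\ sigma (rcons (mkseq U t) (U t)) = W (nx (P t)).
  move=> covs; rewrite /U replayP; apply: cover_with_answerP => //.
    exact: (answers_interleave ansW _ _).1.
  by rewrite -replayP; exact: answers_extend_cofinal.
have covU t : open_cover_seq (mkseq U t).
  elim: t => [|t IHt] i; rewrite size_mkseq // ltnS leq_eqVlt => /orP [/eqP ->|lt_i].
    by rewrite nth_mkseq //; exact: (answerU t IHt).1.
  have := IHt i; rewrite size_mkseq nth_mkseq // => /(_ lt_i).
  by rewrite nth_mkseq // ltnW.
have [_ [_ cov]] := sigma_wins (fun t => (answerU t (covU t)).1).
have : (\bigcup_(u in range (fun n => sigma (mkseq U n.+1))) u) a by rewrite cov.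
move=> [_ [t _ <-]]; rewrite mkseqS (answerU t (covU t)).2 => Wa.
exists (nx (P t)) => x; rewrite in_cons => /orP [/eqP -> //|Gx].
exact: (projT2 (cid (catch (P t)))).
Qed.

Fixpoint upto_strategy (k : nat) : fin_strategy :=
  if k is k'.+1 then extend (upto_strategy k') else fun _ => [::].

Lemma wins_upto_strategy k : wins_upto k (upto_strategy k).
Proof.
elim: k => [|k IHk]; last exact: wins_upto_extend.
by move=> W _ [|//] _; exists 0%N.
Qed.

Definition omega_strategy : fin_strategy :=
  interleave (fun k _ th => upto_strategy k th).

Definition dual_strategy : fin_strategy :=
  interleave (fun _ _ th => omega_strategy th).

Lemma dual_strategy_thread W : answers dual_strategy W ->
  forall m (G : seq X), exists j, {in G, forall x, thread W m j x}.
Proof.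
move=> ansW m G.
have ans_m : answers omega_strategy (thread W m).
  by move=> j; have := answers_interleave ansW m j.
have ans_mk : answers (upto_strategy (size G)) (thread (thread W m) (size G)).
  by move=> j; have := answers_interleave ans_m (size G) j.
have [j Gj] := wins_upto_strategy ans_mk (leqnn _).
by exists (pairn (size G, j)).
Qed.

End FromOpenCoverStrategy.
End FiniteSetGame.

Local Open Scope ring_scope.

Section CpNeighbourhoods.
Variables (R : realType) (X : topologicalType).
Local Notation Z := (Cp R X).

Lemma Cp_eval_continuous (x : X) : continuous (fun h : Z => sval h x).
Proof.
move=> h; have sval_cont : continuous (fun h : Z => sval h : {ptws X -> R}).
  exact: initial_continuous.
have eval_cont : {for sval h : {ptws X -> R}, continuous (fun f : {ptws X -> R} => f x)}.
  exact: (@proj_continuous X (fun _ => R) x).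
exact: continuous_comp (sval_cont h) eval_cont.
Qed.

Definition Cp_ball (g : Z) (F : seq X) (e : R) : set Z :=
  [set h | {in F, forall x, `|sval h x - sval g x| < e}].

Lemma nbhs_Cp_ball g F e : 0 < e -> nbhs g (Cp_ball g F e).
Proof.
move=> e0; elim: F => [|x F IHF].
  by apply: filterS (@filterT _ (@nbhs _ Z g) _) => h _ x.
have near_x : \forall h \near g, `|sval g x - sval h x| < e.
  exact: (@cvgr_dist_lt _ _ _ _ (nbhs_filter g) _ _ (@Cp_eval_continuous x g) e e0).
apply: filterS (filterI near_x IHF) => h [hx hF] y; rewrite in_cons.
by case/orP => [/eqP ->|]; [rewrite distrC | exact: hF].
Qed.

Lemma ptws_ball_sub (f : {ptws X -> R}) (O : set {ptws X -> R}) : nbhs f O ->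
  exists (F : seq X) (e : R), 0 < e /\
    [set k : {ptws X -> R} | {in F, forall x, `|k x - f x| < e}] `<=` O.
Proof.
pose D := [set i : seq X * R | 0 < i.2].
pose box (i : seq X * R) := [set k : {ptws X -> R} | {in i.1, forall x, `|k x - f x| < i.2}].
pose Fb := filter_from D box.
have FFb : Filter Fb.
  apply: filter_from_filter; first by exists ([::], 1); rewrite /D /=.
  move=> [F1 e1] [F2 e2]; rewrite /D /= => e1_gt0 e2_gt0.
  exists (F1 ++ F2, Num.min e1 e2); first by rewrite /= lt_min e1_gt0 e2_gt0.
  move=> k /= kF; split => x Fx; apply: lt_le_trans (kF x _) _;
    by rewrite ?mem_cat ?Fx ?orbT ?ge_min ?lexx ?orbT.
have : {ptws, Fb --> f}.
  apply/(pointwise_cvgP _ FFb) => t N /nbhs_ballP [e /= e0 eN].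
  exists ([:: t], e) => //= k kt; apply: eN.
  by rewrite -ball_normE /ball_ /= distrC; apply: kt; rewrite mem_head.
by move=> Fb_f /Fb_f [[F e] /= e0 sub]; exists F, e.
Qed.

Lemma Cp_ball_sub (g : Z) (B : set Z) :
  nbhs g B -> exists F e, 0 < e /\ Cp_ball g F e `<=` B.
Proof.
rewrite nbhsE => -[Q [oQ Qg] QB]; case: oQ => O oO eQ; rewrite -eQ in Qg QB.
have [F [e [e0 FO]]] := ptws_ball_sub (open_nbhs_nbhs (conj oO Qg)).
by exists F, e; split => // h hF; apply: QB; exact: FO.
Qed.

End CpNeighbourhoods.

Section DualStrategyOnCp.
Variables (R : realType) (X : topologicalType).
Local Notation Z := (Cp R X).
Variable sigma : seq (set (set X)) -> set X.
Hypothesis sigma_wins : II_winning (open_covers X) (open_covers X) sigma.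
Local Notation psi := (dual_strategy sigma).

(* The precision demanded at move [pairn (m, j)] is [1 / (m + 1)], constant
   along each thread of [dual_strategy]. *)
Definition eps_at (n : nat) : R := ((unpairn n).1.+1%:R)^-1.

Lemma eps_at_gt0 n : 0 < eps_at n.
Proof. by rewrite invr_gt0 ltr0n. Qed.

Lemma eps_at_thread_le (e : R) : 0 < e ->
  exists m, forall j, eps_at (pairn (m, j)) <= e.
Proof.
move=> e0; exists (Num.truncn e^-1) => j; rewrite /eps_at Cantor.cancel_of_to /=.
rewrite -[leRHS]invrK lef_pV2 ?posrE ?invr_gt0 ?ltr0n //.
exact: ltW (truncnS_gt _).
Qed.

Definition close_set (g f : Z) (n : nat) : set X :=
  [set x | `|sval f x - sval g x| < eps_at n].

Lemma open_close_set g f n : open (close_set g f n).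
Proof.
have cont_fg : continuous (fun x => sval f x - sval g x).
  move=> x; apply: continuousB.
    by have := set_mem (svalP f); apply.
  by have := set_mem (svalP g); apply.
have -> : close_set g f n = (fun x => sval f x - sval g x) @^-1` ball 0 (eps_at n).
  by apply/seteqP; split => x /=; rewrite -ball_normE /ball_ /= sub0r normrN.
by move/continuousP: cont_fg; apply; exact: ball_open.
Qed.

Definition close_seq (g : Z) (c : nat -> Z) (n : nat) : seq (set X) :=
  mkseq (fun i => close_set g (c i) i) n.

(* The closeness sets of the [c i] answer the finite sets played by [psi]. *)
Lemma dual_strategy_cluster (g : Z) (c : nat -> Z) :
  (forall n, Cp_ball g (psi (close_seq g c n)) (eps_at n) (c n)) ->
  forall B, nbhs g B -> exists n, B (c n).
Proof.
move=> cn B /Cp_ball_sub [F [e [e0 FB]]].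
have [m eps_m] := eps_at_thread_le e0.
have ans : answers psi (fun i => close_set g (c i) i).
  by move=> n; split; [exact: open_close_set | exact: cn].
have [j Fj] := dual_strategy_thread sigma_wins ans m F.
by exists (pairn (m, j)); apply: FB => x Fx; apply: lt_le_trans (Fj x Fx) (eps_m j).
Qed.

Local Notation o := (Cp_zero R X).

Definition omega_step (prev : seq Z) (A : set Z) : seq Z :=
  rcons prev (xget o (A `&` Cp_ball o (psi (close_seq o (nth o prev) (size prev)))
                                      (eps_at (size prev)))).

Definition omega_answer (As : seq (set Z)) : Z := last o (foldl omega_step [::] As).

Lemma omega_answer_wins : II_winning (Omega_o R X) (Omega_o R X) omega_answer.
Proof.
move=> As omegaA.
pose c n := omega_answer (mkseq As n.+1).
have playP n : foldl omega_step [::] (mkseq As n) = mkseq c n.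
  elim: n => [//|n IHn]; rewrite mkseqS foldl_rcons IHn mkseqS; congr rcons.
  by rewrite /c /omega_answer mkseqS foldl_rcons IHn last_rcons.
have cE n : c n = xget o (As n `&` Cp_ball o (psi (close_seq o c n)) (eps_at n)).
  rewrite {1}/c /omega_answer mkseqS foldl_rcons playP last_rcons size_mkseq.
  by congr (xget o (_ `&` Cp_ball o (psi _) _)); apply: eq_in_mkseq => i /= lt_in;
    rewrite nth_mkseq.
have cP n : (As n `&` Cp_ball o (psi (close_seq o c n)) (eps_at n)) (c n).
  rewrite cE; apply: xgetPex; apply: (omegaA n).2.
  exact: nbhs_Cp_ball (eps_at_gt0 n).
split; first by move=> n; exact: (cP n).1.
split; first by move=> [n _ cn_o]; apply: (omegaA n).1; rewrite -cn_o; exact: (cP n).1.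
move=> B /(dual_strategy_cluster (fun n => (cP n).2)) [n Bn].
by exists (c n); split => //; exists n.
Qed.

Section ProductTightness.
Variables (Y : topologicalType) (tightY : countably_tight Y).
Variables (A : set (Z * Y)%type) (g : Z) (y : Y).
Hypothesis clA : closure A ((g, y) : (Z * Y)%type).

Definition history_ball (p : seq (Z * Y)) : set Z :=
  Cp_ball g (psi (close_seq g (fun i => (nth (g, y) p i).1) (size p)))
    (eps_at (size p)).

Definition candidates (p : seq (Z * Y)) : set (Z * Y) :=
  A `&` [set b | history_ball p b.1].

Lemma closure_snd_candidates p : closure (snd @` candidates p) y.
Proof.
move=> O Oy.
have N : nbhs ((g, y) : (Z * Y)%type) (history_ball p `*` O).
  by exists (history_ball p, O) => //; split => //; exact: nbhs_Cp_ball (eps_at_gt0 _).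
have [b [Ab [b1 b2]]] := clA N.
by exists b.2; split => //; exists b.
Qed.

Lemma exists_countable_candidates p : exists E : set (Z * Y),
  [/\ E `<=` candidates p, countable E & closure (snd @` E) y].
Proof.
have [C [sub_C cnt_C cl_C]] := tightY (closure_snd_candidates p).
pose pre w := xget (g, y) [set b | candidates p b /\ b.2 = w].
have preP w : C w -> candidates p (pre w) /\ (pre w).2 = w.
  move=> /sub_C [b pb <-].
  by apply: (@xgetPex _ _ [set b' | candidates p b' /\ b'.2 = b.2]); exists b.
exists (pre @` C); split.
- by move=> _ [w Cw <-]; exact: (preP w Cw).1.
- exact: card_le_trans (card_image_le _ _) cnt_C.
- suff -> : snd @` (pre @` C) = C by [].
  apply/seteqP; split => [_ [_ [w Cw <-] <-]|w Cw]; first by rewrite (preP w Cw).2.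
  by exists (pre w); [exists w | exact: (preP w Cw).2].
Qed.

Definition witnesses p := projT1 (cid (exists_countable_candidates p)).

Lemma witnessesP p : [/\ witnesses p `<=` candidates p, countable (witnesses p)
  & closure (snd @` witnesses p) y].
Proof. exact: projT2 (cid (exists_countable_candidates p)). Qed.

Fixpoint history_tree (n : nat) : set (seq (Z * Y)) :=
  if n is n'.+1 then \bigcup_(p in history_tree n') (rcons p @` witnesses p)
  else [set [::]].

Lemma countable_history_tree n : countable (history_tree n).
Proof.
elim: n => [|n IHn] /=; first exact: countable1.
apply: bigcup_countable => // p _; have [_ cnt _] := witnessesP p.
exact: card_le_trans (card_image_le _ _) cnt.
Qed.

Definition tight_set := \bigcup_(n in [set: nat]) \bigcup_(p in history_tree n) witnesses p.

Lemma countable_tight_set : countable tight_set.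
Proof.
apply: bigcup_countable => [|n _]; first exact: countableP.
apply: bigcup_countable => [|p _]; first exact: countable_history_tree.
by have [] := witnessesP p.
Qed.

Lemma tight_set_sub : tight_set `<=` A.
Proof. by move=> b [n _ [p _ pb]]; have [sub _ _] := witnessesP p; case: (sub b pb). Qed.

(* Along any branch of the history tree whose second coordinates stay in a
   neighbourhood [N2] of [y], the first coordinates accumulate at [g]. *)
Lemma closure_tight_set : closure tight_set ((g, y) : (Z * Y)%type).
Proof.
move=> N [[N1 N2]] /= [N1g N2y] sub_N.
have pick_near p : exists b, witnesses p b /\ N2 b.2.
  have [_ _ cl] := witnessesP p; have [_ [[b pb <-] N2b]] := cl _ N2y.
  by exists b.
pose step p := projT1 (cid (pick_near p)).
have stepP p : witnesses p (step p) /\ N2 (step p).2 := projT2 (cid (pick_near p)).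
pose bb t := step (history step t).
have ball_bb t : Cp_ball g (psi (close_seq g (fun i => (bb i).1) t)) (eps_at t) (bb t).1.
  have [sub _ _] := witnessesP (history step t).
  have [_] := sub _ (stepP (history step t)).1.
  rewrite /history_ball -/(bb t) historyE size_mkseq.
  by congr (Cp_ball g (psi _) _ _); apply: eq_in_mkseq => i /= lt_it; rewrite nth_mkseq.
have tree_hist t : history_tree t (history step t).
  elim: t => [//|t IHt] /=; exists (history step t) => //.
  by exists (bb t) => //; exact: (stepP _).1.
have [n N1n] := dual_strategy_cluster ball_bb N1g.
exists (bb n); split.
  by exists n => //; exists (history step n); [exact: tree_hist | exact: (stepP _).1].
by apply: sub_N; split; [exact: N1n | exact: (stepP _).2].
Qed.

End ProductTightness.

Lemma Cp_productively_countably_tight : productively_countably_tight Z.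
Proof.
move=> Y tightY A [g y] clA; exists (tight_set tightY clA).
by split; [exact: tight_set_sub | exact: countable_tight_set | exact: closure_tight_set].
Qed.

End DualStrategyOnCp.

Theorem proposition3p4 (R : realType) (X : topologicalType) :
  tychonoff_space X ->
  II_has_winning_strategy (open_covers X) (open_covers X) ->
  II_has_winning_strategy (Omega_o R X) (Omega_o R X) /\
  productively_countably_tight (Cp R X).
Proof.
move=> _ [sigma sigma_wins]; split.
- by exists (omega_answer sigma); exact: omega_answer_wins.
- exact: Cp_productively_countably_tight sigma_wins.
Qed.
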